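(* Let $\operatorname{Cs}(4)=\{x,y,z\}$ be the quandle with multiplication $xx=x$, $yy=y$, $zz=z$, $xy=x$, $xz=y$, $yx=y$, $yz=x$, $zx=z$, $zy=z$. Then the set of non-zero maximal quandles in $\mathbb{Z}[\operatorname{Cs}(4)]$ is $\operatorname{mq}(\mathbb{Z}[\operatorname{Cs}(4)])=\{N_1,N_2\}$, where $$N_1=\big\{z,~(1-\beta)x+\beta y~|~\beta\in\mathbb{Z}\big\},\qquad N_2=\big\{\alpha x+\alpha y+(1-2\alpha)z~|~\alpha\in\mathbb{Z}\big\}.$$
   Context: A quandle is a non-empty set with a binary operation $(u,v)\mapsto uv$ such that $uu=u$; for all $u,v$ there is a unique $w$ with $u=wv$; and $(uv)w=(uw)(vw)$. For a quandle $Q$, the quandle ring $\mathbb{Z}[Q]$ is the free abelian group with basis $Q$, with multiplication $\big(\sum_i\alpha_i q_i\big)\big(\sum_j\beta_j q_j\big)=\sum_{i,j}\alpha_i\beta_j (q_iq_j)$. A quandle in $\mathbb{Z}[Q]$ is a subset closed under the ring multiplication which is a quandle under the restricted multiplication. $\operatorname{mq}(\mathbb{Z}[Q])$ is the set of all quandles in $\mathbb{Z}[Q]$ different from $\{0\}$ that are maximal with respect to inclusion among quandles in $\mathbb{Z}[Q]$. *)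

From mathcomp Require Import all_boot all_order all_algebra.
Set Implicit Arguments. Unset Strict Implicit. Unset Printing Implicit Defensive.
Import GRing.Theory Num.Theory.
Local Open Scope ring_scope.

(* The quandle ring Z[Q] of a finite magma (Q, op): elements are finitely
   supported (here: all) functions Q -> int, i.e. sum_q u(q) q. *)
Notation qring Q := {ffun Q -> int}.

Definition qbasis (Q : finType) (q : Q) : qring Q := [ffun p => ((p == q) : nat)%:Z].

Definition qring_mul (Q : finType) (op : Q -> Q -> Q) (u v : qring Q) : qring Q :=
  [ffun q => \sum_(i : Q) \sum_(j : Q | op i j == q) u i * v j].

Definition quandle_in (Q : finType) (op : Q -> Q -> Q) (S : qring Q -> Prop) : Prop :=
  [/\ (exists u, S u),
      (forall u v, S u -> S v -> S (qring_mul op u v)),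
      (forall u, S u -> qring_mul op u u = u),
      (forall u v, S u -> S v ->
         exists w, S w /\ u = qring_mul op w v /\
           (forall w', S w' -> u = qring_mul op w' v -> w' = w)) &
      (forall u v w, S u -> S v -> S w ->
         qring_mul op (qring_mul op u v) w
         = qring_mul op (qring_mul op u w) (qring_mul op v w))].

Definition mq (Q : finType) (op : Q -> Q -> Q) (S : qring Q -> Prop) : Prop :=
  [/\ quandle_in op S,
      ~ (forall u, S u <-> u = 0) &
      (forall T, quandle_in op T -> (forall u, S u -> T u) -> forall u, T u -> S u)].

Definition cs4_x : 'I_3 := @Ordinal 3 0 isT.
Definition cs4_y : 'I_3 := @Ordinal 3 1 isT.
Definition cs4_z : 'I_3 := @Ordinal 3 2 isT.

Definition cs4_op (i j : 'I_3) : 'I_3 :=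
  match nat_of_ord i, nat_of_ord j with
  | 0, 2 => cs4_y
  | 1, 2 => cs4_x
  | _, _ => i
  end.

Definition N1 (u : qring 'I_3) : Prop :=
  u = qbasis cs4_z \/
  exists beta : int, u = qbasis cs4_x *~ (1 - beta) + qbasis cs4_y *~ beta.

Definition N2 (u : qring 'I_3) : Prop :=
  exists alpha : int,
    u = qbasis cs4_x *~ alpha + qbasis cs4_y *~ alpha + qbasis cs4_z *~ (1 - 2 * alpha).

(* In coordinates [u = a x + b y + c z], the idempotents of Z[Cs(4)] are 0, [z],
   the elements [(1 - b) x + b y] of N1 and the elements of N2.  A quandle with
   a nonzero element cannot contain 0, so it consists of such idempotents, and
   it cannot contain both some [(1 - b) x + b y] and an element of N2 other
   than [z]: dividing the former on the right by the latter starts an infinite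
   descent.  So every nonzero quandle in Z[Cs(4)] lies in N1 or in N2; as both
   are quandles and neither contains the other, they are the maximal ones. *)

From mathcomp Require Import all_boot all_order all_algebra zify ring.
From Stdlib Require Import Classical.
Set Implicit Arguments. Unset Strict Implicit. Unset Printing Implicit Defensive.
Import GRing.Theory Num.Theory.
Local Open Scope ring_scope.

Section QuandlesInQuandleRings.

Variables (Q : finType) (op : Q -> Q -> Q).

Local Notation mul := (qring_mul op).

Lemma qring_mulr0 (u : qring Q) : mul u 0 = 0.
Proof.
apply/ffunP => q; rewrite !ffunE big1 // => i _.
by rewrite big1 // => j _; rewrite ffunE mulr0.
Qed.

Lemma quandle_in_ext (S T : qring Q -> Prop) :
  (forall u, S u <-> T u) -> quandle_in op S -> quandle_in op T.
Proof.
move=> ST [[u Su] mulS idS divS distS]; split.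
- by exists u; apply/ST.
- by move=> v w /ST Sv /ST Sw; apply/ST; apply: mulS.
- by move=> v /ST; apply: idS.
- move=> v w /ST Sv /ST Sw; have [x [Sx [-> uniq]]] := divS v w Sv Sw.
  by exists x; split; [apply/ST | split=> // x' /ST; apply: uniq].
- by move=> v w x /ST Sv /ST Sw /ST Sx; apply: distS.
Qed.

Lemma mq_ext (S T : qring Q -> Prop) :
  (forall u, S u <-> T u) -> mq op S -> mq op T.
Proof.
move=> ST [qS nzS maxS]; split.
- exact: quandle_in_ext qS.
- by move=> T0; apply: nzS => u; rewrite ST.
- move=> T' qT' TT' u T'u; apply/ST; apply: maxS qT' _ u T'u => v /ST.
  exact: TT'.
Qed.

(* Every [u] is a right quotient [w * 0], and [w * 0 = 0] by bilinearity. *)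
Lemma quandle_in0 (S : qring Q -> Prop) :
  quandle_in op S -> S 0 -> forall u, S u -> u = 0.
Proof.
case=> _ _ _ divS _ S0 u Su.
by have [w [_ [-> _]]] := divS u 0 Su S0; rewrite qring_mulr0.
Qed.

Lemma quandle_in_nonzero (S : qring Q -> Prop) :
  quandle_in op S -> ~ (forall u, S u <-> u = 0) -> exists u, S u /\ u != 0.
Proof.
move=> qS nzS; have [[u Su] _ _ _ _] := qS.
have [u0 | unz] := eqVneq u 0; last by exists u.
rewrite u0 in Su; case: nzS => v; split; first exact: quandle_in0 qS Su v.
by move=> ->.
Qed.

Lemma quandle_in_involutive (S : qring Q -> Prop) :
  (exists u, S u) ->
  (forall u v, S u -> S v -> S (mul u v)) ->
  (forall u, S u -> mul u u = u) ->
  (forall u v, S u -> S v -> mul (mul u v) v = u) ->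
  (forall u v w, S u -> S v -> S w -> mul (mul u v) w = mul (mul u w) (mul v w)) ->
  quandle_in op S.
Proof.
move=> neS mulS idS invS distS; split=> // u v Su Sv.
exists (mul u v); split; first exact: mulS.
by split=> [|w' Sw' ->]; rewrite invS.
Qed.

Definition quandle_dichotomy (A B : qring Q -> Prop) :=
  forall T, quandle_in op T -> (exists u, T u /\ u != 0) ->
    (forall u, T u -> A u) \/ (forall u, T u -> B u).

Lemma quandle_dichotomyC A B : quandle_dichotomy A B -> quandle_dichotomy B A.
Proof. by move=> AB T qT nzT; rewrite or_comm; apply: AB. Qed.

Lemma mq_of_dichotomy (A B : qring Q -> Prop) :
  quandle_dichotomy A B -> quandle_in op A ->
  (exists u, [/\ A u, u != 0 & ~ B u]) -> mq op A.
Proof.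
move=> AB qA [a [Aa anz nBa]]; split=> //.
  by move=> A0; move: anz; rewrite (proj1 (A0 a) Aa) eqxx.
move=> T qT AT.
have [TA | TB] : (forall u, T u -> A u) \/ (forall u, T u -> B u).
  by apply: AB => //; exists a; split=> //; apply: AT.
- exact: TA.
- by case: nBa; apply/TB/AT.
Qed.

Lemma mq_dichotomyP (A B : qring Q -> Prop) :
  quandle_dichotomy A B -> quandle_in op A -> quandle_in op B ->
  (exists u, [/\ A u, u != 0 & ~ B u]) -> (exists u, [/\ B u, u != 0 & ~ A u]) ->
  forall S, mq op S <-> (forall u, S u <-> A u) \/ (forall u, S u <-> B u).
Proof.
move=> AB qA qB AnB BnA S; split=> [[qS nzS maxS] | [SA | SB]].
- have [SA | SB] := AB S qS (quandle_in_nonzero qS nzS); [left | right] => u.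
    by split=> [/SA | /(maxS A qA SA)].
  by split=> [/SB | /(maxS B qB SB)].
- apply: (mq_ext (S := A)) => [u|]; first by rewrite SA.
  exact: mq_of_dichotomy AB qA AnB.
- apply: (mq_ext (S := B)) => [u|]; first by rewrite SB.
  exact: mq_of_dichotomy (quandle_dichotomyC AB) qB BnA.
Qed.

End QuandlesInQuandleRings.

Definition cs4_vec (a b c : int) : qring 'I_3 :=
  [ffun i : 'I_3 => if val i == 0%N then a else if val i == 1%N then b else c].

Definition N1_elt (b : int) := cs4_vec (1 - b) b 0.
Definition N2_elt (a : int) := cs4_vec a a (1 - 2 * a).

Local Notation mul := (qring_mul cs4_op).

Lemma cs4_vec_mul a b c a' b' c' :
  mul (cs4_vec a b c) (cs4_vec a' b' c') =
  cs4_vec (a * (a' + b') + b * c') (b * (a' + b') + a * c') (c * (a' + b' + c')).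
Proof.
apply/ffunP => i; rewrite !ffunE !big_ord_recl !big_ord0 !addr0.
rewrite !(big_mkcond (fun j => cs4_op _ j == i)) !big_ord_recl !big_ord0 /=.
by case: i => [[|[|[|i]]] Hi] //=; rewrite !ffunE /=; ring.
Qed.

Lemma cs4_vec_eta (u : qring 'I_3) : u = cs4_vec (u cs4_x) (u cs4_y) (u cs4_z).
Proof.
by apply/ffunP => -[[|[|[|i]]] Hi]; rewrite ffunE //=; congr (u _); apply: val_inj.
Qed.

Lemma cs4_vec_inj a b c a' b' c' :
  cs4_vec a b c = cs4_vec a' b' c' -> [/\ a = a', b = b' & c = c'].
Proof.
move=> e; have coord i := congr1 (fun u : qring 'I_3 => u i) e.
by split; [move: (coord cs4_x) | move: (coord cs4_y) | move: (coord cs4_z)];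
  rewrite !ffunE.
Qed.

Lemma cs4_vec0 : cs4_vec 0 0 0 = 0.
Proof. by apply/ffunP => -[[|[|[|i]]] Hi]; rewrite !ffunE. Qed.

Lemma qbasis_cs4_z : qbasis cs4_z = cs4_vec 0 0 1.
Proof. by apply/ffunP => -[[|[|[|i]]] Hi]; rewrite !ffunE. Qed.

Lemma cs4_vec_lincomb a b c :
  qbasis cs4_x *~ a + qbasis cs4_y *~ b + qbasis cs4_z *~ c = cs4_vec a b c.
Proof.
have ffunMzE (f : qring 'I_3) (n : int) i : (f *~ n) i = f i *~ n.
  by case: n => n /=; rewrite ?ffunE ffunMnE.
by apply/ffunP => -[[|[|[|i]]] Hi]; rewrite !ffunE !ffunMzE !ffunE /=; lia.
Qed.

Lemma N1E u : N1 u <-> u = cs4_vec 0 0 1 \/ exists b, u = N1_elt b.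
Proof.
have lincomb b : qbasis cs4_x *~ (1 - b) + qbasis cs4_y *~ b = N1_elt b.
  by rewrite -[RHS]cs4_vec_lincomb mulr0z addr0.
rewrite /N1 qbasis_cs4_z.
by split=> -[-> | [b ->]];
  [left | right; exists b; rewrite lincomb | left | right; exists b; rewrite lincomb].
Qed.

Lemma N2E u : N2 u <-> exists a, u = N2_elt a.
Proof. by split=> -[a ->]; exists a; rewrite cs4_vec_lincomb. Qed.

Lemma cs4_idem_cases a b c : mul (cs4_vec a b c) (cs4_vec a b c) = cs4_vec a b c ->
  [\/ [/\ a = 0, b = 0 & c = 0], [/\ c = 0 & a + b = 1] | [/\ a = b & c = 1 - 2 * a]].
Proof.
rewrite cs4_vec_mul => /cs4_vec_inj [ea eb ec].
have [c0 | cnz] := eqVneq c 0.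
  have [ab1 | ab_ne1] := eqVneq (a + b) 1; first by constructor 2.
  have ab1_nz : a + b - 1 != 0 by apply: contraNneq ab_ne1 => ?; lia.
  have /eqP : a * (a + b - 1) = 0 by subst c; lia.
  have /eqP : b * (a + b - 1) = 0 by subst c; lia.
  rewrite !mulf_eq0 (negbTE ab1_nz) !orbF => /eqP b0 /eqP a0.
  by constructor 1.
have /eqP : c * (a + b + c - 1) = 0 by lia.
rewrite mulf_eq0 (negbTE cnz) /= => /eqP abc1.
have /eqP : (a - b) * c = 0 by nia.
by rewrite mulf_eq0 (negbTE cnz) orbF subr_eq0 => /eqP ab; constructor 3; lia.
Qed.

Lemma cs4_idem_N1_or_N2 u : mul u u = u -> u != 0 -> N1 u \/ N2 u.
Proof.
rewrite N1E N2E (cs4_vec_eta u).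
move: (u cs4_x) (u cs4_y) (u cs4_z) => a b c idem nz.
case: (cs4_idem_cases idem) nz => [[-> -> ->] | [-> ab1] | [<- ->]] nz.
- by rewrite cs4_vec0 eqxx in nz.
- by left; right; exists b; rewrite /N1_elt -ab1 addrK.
- by right; exists a.
Qed.

(* The z-coordinate of [w * N2_elt a] is that of [w], which rules out [w = z]
   and [w] in [N2]; for [w = N1_elt b'] one gets [2b - 1 = (4a - 1)(2b' - 1)]. *)
Lemma cs4_div_N2_elt w a b : mul w w = w -> w != 0 ->
  mul w (N2_elt a) = N1_elt b ->
  exists2 b', w = N1_elt b' & 2 * b - 1 = (4 * a - 1) * (2 * b' - 1).
Proof.
move=> idem nz.
case: (cs4_idem_N1_or_N2 idem nz) => [/N1E [-> | [b' ->]] | /N2E [a' ->]];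
  rewrite /N1_elt /N2_elt cs4_vec_mul => /cs4_vec_inj [ex ey ez].
- by lia.
- by exists b' => //; nia.
- by lia.
Qed.

(* Descent: by [cs4_div_N2_elt], [|2b - 1|] would be divisible by arbitrarily
   large powers of [|4a - 1| >= 3]. *)
Lemma cs4_N1_elt_N2_elt_excl (T : qring 'I_3 -> Prop) b a :
  quandle_in cs4_op T -> T (N1_elt b) -> T (N2_elt a) -> a = 0.
Proof.
move=> qT Tb Ta; have [_ _ idT divT _] := qT.
have T_nz u : T u -> u != 0.
  move=> Tu; apply/eqP => u0; rewrite u0 in Tu.
  by move: (quandle_in0 qT Tu Tb); rewrite -cs4_vec0 => /cs4_vec_inj []; lia.
apply/eqP; apply: contraT => anz.
suff descent n (b' : int) : (absz (2 * b' - 1)%R < n)%N -> ~ T (N1_elt b').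
  by case: (descent _ b (ltnSn _) Tb).
elim: n b' => [//|n IH] b' lt_n Tb'.
have [w [Tw [e _]]] := divT _ _ Tb' Ta.
have [b'' wE eb] := cs4_div_N2_elt (idT w Tw) (T_nz w Tw) (esym e).
apply: (IH b''); last by rewrite -wE.
move: lt_n; rewrite eb abszM.
have : (3 <= absz (4 * a - 1)%R)%N by lia.
have : (1 <= absz (2 * b'' - 1)%R)%N by lia.
nia.
Qed.

Lemma N1_quandle : quandle_in cs4_op N1.
Proof.
apply: quandle_in_involutive.
- by exists (cs4_vec 0 0 1); apply/N1E; left.
- move=> u v /N1E [-> | [b ->]] /N1E [-> | [c ->]]; apply/N1E;
    rewrite /N1_elt cs4_vec_mul.
  + by left; congr cs4_vec; ring.
  + by left; congr cs4_vec; ring.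
  + by right; exists (1 - b); congr cs4_vec; ring.
  + by right; exists b; congr cs4_vec; ring.
- by move=> u /N1E [-> | [b ->]]; rewrite /N1_elt cs4_vec_mul; congr cs4_vec; ring.
- by move=> u v /N1E [-> | [b ->]] /N1E [-> | [c ->]];
    rewrite /N1_elt !cs4_vec_mul; congr cs4_vec; ring.
- by move=> u v w /N1E [-> | [b ->]] /N1E [-> | [c ->]] /N1E [-> | [d ->]];
    rewrite /N1_elt !cs4_vec_mul; congr cs4_vec; ring.
Qed.

Lemma N2_quandle : quandle_in cs4_op N2.
Proof.
have N2_mul a c : mul (N2_elt a) (N2_elt c) = N2_elt a.
  by rewrite cs4_vec_mul; congr cs4_vec; ring.
apply: quandle_in_involutive.
- by exists (N2_elt 0); apply/N2E; exists 0.
- by move=> u v /N2E [a ->] /N2E [c ->]; apply/N2E; exists a; rewrite N2_mul.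
- by move=> u /N2E [a ->]; rewrite N2_mul.
- by move=> u v /N2E [a ->] /N2E [c ->]; rewrite !N2_mul.
- by move=> u v w /N2E [a ->] /N2E [c ->] /N2E [d ->]; rewrite !N2_mul.
Qed.

Lemma cs4_quandle_dichotomy : quandle_dichotomy cs4_op N1 N2.
Proof.
move=> T qT [u0 [Tu0 u0nz]]; have [_ _ idT _ _] := qT.
have T_N1_or_N2 u : T u -> N1 u \/ N2 u.
  move=> Tu; apply: cs4_idem_N1_or_N2 (idT u Tu) _.
  by apply: contra_neq u0nz => u_0; apply: quandle_in0 qT _ u0 Tu0; rewrite -u_0.
have [[b Tb] | noN1] := classic (exists b, T (N1_elt b)).
  left=> u Tu; case: (T_N1_or_N2 u Tu) => [// | /N2E [a ua]].
  have a0 : a = 0 by apply: cs4_N1_elt_N2_elt_excl qT Tb _; rewrite -ua.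
  by apply/N1E; left; rewrite ua a0; congr cs4_vec.
right=> u Tu; case: (T_N1_or_N2 u Tu) => [/N1E [uz | [b ub]] | //].
  by apply/N2E; exists 0; rewrite uz; congr cs4_vec.
by case: noN1; exists b; rewrite -ub.
Qed.

Theorem theorem5p4 :
  forall S : qring 'I_3 -> Prop,
    mq cs4_op S <->
    ((forall u, S u <-> N1 u) \/ (forall u, S u <-> N2 u)).
Proof.
apply: mq_dichotomyP.
- exact: cs4_quandle_dichotomy.
- exact: N1_quandle.
- exact: N2_quandle.
- exists (N1_elt 0); split; first by apply/N1E; right; exists 0.
    by rewrite -cs4_vec0; apply/eqP => /cs4_vec_inj [].
  by case/N2E => a /cs4_vec_inj []; lia.
- exists (N2_elt 1); split; first by apply/N2E; exists 1.
    by rewrite -cs4_vec0; apply/eqP => /cs4_vec_inj [].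
  by case/N1E => [| [b]] /cs4_vec_inj []; lia.
Qed.
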